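(* There is an absolute constant $c>0$ such that for every instance $I$ of continuous BGT (with $n\ge2$ and $h_{\max}>h_{\min}$), the schedule produced by Algorithm 2 satisfies $\mathrm{MH}\le c\cdot\log_2\lceil h_{\max}/h_{\min}\rceil\cdot\mathrm{OPT}(I)$. Algorithm 2: let $s=\lfloor\log_2(h_{\max}/h_{\min})\rfloor+1$ and, for $i=1,\dots,s$, $V_i=\{v_j\in V: 2^{i-1}h_{\min}\le h_j<2^i h_{\min}\}$ (with $v_j$ of rate $h_j=2^s h_{\min}$ impossible, so the $V_i$ partition $V$). For each nonempty $V_i$ compute a minimum spanning tree $T_i$ of $V_i$ and a directed closed Euler tour $C_i$ of $T_i$ (a cyclic walk traversing each edge of $T_i$ twice), and mark an arbitrary point of $C_i$ as its ''last visited point''. The robot starts at $v_1$ and repeats forever: for $i=1,\dots,s$ with $V_i\ne\emptyset$: travel directly to the last visited point of $C_i$; then, if $|V_i|\ge2$, walk along $C_i$ in the tour direction from that point, stopping at the first tour vertex at which the distance covered along $C_i$ in this phase is at least $D$, and make that vertex the new last visited point of $C_i$. Bamboos are cut whenever the robot is at their point.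
   Context: Continuous BGT: bamboos at points $V=\{v_1,\dots,v_n\}$, growth rates $h_1\ge\dots\ge h_n>0$, initial heights $0$; symmetric travel times $t_{i,j}>0$ ($i\ne j$) satisfying the triangle inequality. The robot starts at $v_1$ at time $0$, moving from $v_i$ to $v_j$ takes time $t_{i,j}$, and the bamboo at a point is cut instantaneously to $0$ whenever the robot is there. Height of $b_i$ at time $t$ = $h_i$ times time since its last cut (or since $0$). $\mathrm{MH}$ = supremum of all heights over all times; $\mathrm{OPT}(I)$ = infimum of $\mathrm{MH}$ over all robot walks. $h_{\max}=h_1$, $h_{\min}=h_n$, $D=\max_{i,j}t_{i,j}$. *)

From HB Require Import structures.
From mathcomp Require Import all_boot all_order all_algebra.
From mathcomp Require Import all_classical all_reals.
From mathcomp Require Import ereal exp.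
From mathcomp Require Import Rstruct.

Set Implicit Arguments. Unset Strict Implicit. Unset Printing Implicit Defensive.
Import Order.TTheory GRing.Theory Num.Theory.
Local Open Scope ring_scope.

Lemma first_lt (n : nat) : (1 < n)%N -> (0 < n)%N.
Proof. by move=> h; apply: ltnW. Qed.
Lemma last_lt (n : nat) : (1 < n)%N -> (n.-1 < n)%N.
Proof. by move=> h; rewrite ltn_predL; apply: ltnW. Qed.

(* v_1 (index 0) and v_n (index n-1) *)
Definition first_pt (n : nat) (hn : (1 < n)%N) : 'I_n := Ordinal (first_lt hn).
Definition last_pt (n : nat) (hn : (1 < n)%N) : 'I_n := Ordinal (last_lt hn).

Section BGT.
Variable R : realType.
Variable n : nat.
Implicit Types (h : 'I_n -> R) (t : 'I_n -> 'I_n -> R).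

(* travel time; staying at the same point costs 0 (t_{i,i} is not part of the data) *)
Definition dist t (x y : 'I_n) : R := if x == y then 0 else t x y.

Definition Dmax t : R := \big[Num.max/0]_(i < n) \big[Num.max/0]_(j < n | j != i) t i j.

Definition valid_instance h t : Prop :=
  [/\ (forall i j : 'I_n, (i <= j)%N -> h j <= h i),
      (forall i, 0 < h i),
      (forall i j, i != j -> 0 < t i j),
      (forall i j, t i j = t j i) &
      (forall i j k, dist t i k <= dist t i j + dist t j k)].

(* A robot walk is an infinite sequence of points p 0, p 1, ... ; the robot
   arrives at p k at time arrival t p k. *)
Definition arrival t (p : nat -> 'I_n) (k : nat) : R :=
  \sum_(j < k) dist t (p j) (p j.+1).

(* time of the last cut of bamboo i up to time x (or 0 if none) *)
Definition last_cut t (p : nat -> 'I_n) (i : 'I_n) (x : R) : R :=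
  sup [set y : R | y = 0 \/ exists k, [/\ p k = i, arrival t p k = y & y <= x]]%classic.

Definition height h t (p : nat -> 'I_n) (i : 'I_n) (x : R) : R :=
  h i * (x - last_cut t p i x).

Definition MH h t (p : nat -> 'I_n) : \bar R :=
  ereal_sup [set z | exists i x, 0 <= x /\ z = (height h t p i x)%:E]%classic.

Definition OPT h t (v1 : 'I_n) : \bar R :=
  ereal_inf [set MH h t p | p in [set p : nat -> 'I_n | p 0%N = v1]]%classic.

(* an undirected edge {a,b} is stored as the pair (a,b) with a < b *)
Definition adj (E : {set 'I_n * 'I_n}) : rel 'I_n :=
  fun x y => ((x, y) \in E) || ((y, x) \in E).

Definition is_spanning_tree (S : {set 'I_n}) (E : {set 'I_n * 'I_n}) : Prop :=
  [/\ (forall e, e \in E -> [&& (e.1 < e.2)%N, e.1 \in S & e.2 \in S]),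
      #|E| = #|S|.-1 &
      {in S &, forall x y, connect (adj E) x y}].

Definition tree_weight t (E : {set 'I_n * 'I_n}) : R := \sum_(e in E) t e.1 e.2.

Definition is_MST t (S : {set 'I_n}) (E : {set 'I_n * 'I_n}) : Prop :=
  is_spanning_tree S E /\
  forall E', is_spanning_tree S E' -> tree_weight t E <= tree_weight t E'.

(* c = [c_0; ...; c_{m-1}] is a closed walk c_0 -> c_1 -> ... -> c_{m-1} -> c_0
   along the edges of E (a directed closed Euler tour of the doubled tree):
   each step uses an edge of E and every edge of E is traversed exactly twice *)
Definition euler_tour (E : {set 'I_n * 'I_n}) (c : seq 'I_n) : Prop :=
  let steps := zip c (rot 1 c) in
  [/\ (0 < size c)%N,
      all (fun q => adj E q.1 q.2) steps &
      forall e, e \in E -> count (fun q => (q == e) || ((q.2, q.1) == e)) steps = 2%N].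

Section Alg.
Variables (hn : (1 < n)%N) (h : 'I_n -> R) (t : 'I_n -> 'I_n -> R).

Definition hmax : R := h (first_pt hn).
Definition hmin : R := h (last_pt hn).
Definition log2 (x : R) : R := ln x / ln 2.

Definition nclasses : nat := (`|Num.floor (log2 (hmax / hmin))|%N).+1.

(* class k (k = 0..s-1) is V_{k+1} of the paper *)
Definition Vcls (k : nat) : {set 'I_n} :=
  [set j | (2 ^+ k * hmin <= h j) && (h j < 2 ^+ k.+1 * hmin)].

Definition ne_cls : seq nat := [seq k <- iota 0 nclasses | Vcls k != finset.set0].

(* choices made by the algorithm: tour k = C_k, m0 k = initially marked
   position (index into tour k) *)
Definition alg_choices (tour : nat -> seq 'I_n) (m0 : nat -> nat) : Prop :=
  forall k, (k < nclasses)%N -> Vcls k != finset.set0 ->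
    [/\ (#|Vcls k| = 1%N -> tour k = enum (Vcls k)),
        ((2 <= #|Vcls k|)%N -> exists E, is_MST t (Vcls k) E /\ euler_tour E (tour k)) &
        (m0 k < size (tour k))%N].

Record state := State {
  st_ph : nat;              (* index in ne_cls of the current phase *)
  st_mk : nat -> nat;       (* last visited point of each C_k (index into tour k) *)
  st_walking : bool;        (* false: must travel to last visited point of C_k *)
  st_acc : R;               (* distance covered along C_k in this phase *)
  st_cur : 'I_n }.

Definition step (tour : nat -> seq 'I_n) (st : state) : state :=
  let k := nth 0%N ne_cls (st_ph st) in
  let c := tour k in
  let nxt := ((st_ph st).+1 %% size ne_cls)%N in
  if ~~ st_walking st then
    let p' := nth (st_cur st) c (st_mk st k) in
    if (2 <= #|Vcls k|)%N then State (st_ph st) (st_mk st) true 0 p'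
    else State nxt (st_mk st) false 0 p'
  else
    let r := ((st_mk st k).+1 %% size c)%N in
    let p' := nth (st_cur st) c r in
    let a := st_acc st + dist t (st_cur st) p' in
    let mk' := fun j => if j == k then r else st_mk st j in
    if Dmax t <= a then State nxt mk' false 0 p'
    else State (st_ph st) mk' true a p'.

(* the walk produced by Algorithm 2: one point per elementary move *)
Definition alg_walk (tour : nat -> seq 'I_n) (m0 : nat -> nat) (k : nat) : 'I_n :=
  st_cur (iter k (step tour) (State 0 m0 false 0 (first_pt hn))).
End Alg.
End BGT.

From HB Require Import structures.
From mathcomp Require Import all_boot all_order all_algebra.
From mathcomp Require Import all_classical all_reals.
From mathcomp Require Import ereal exp.
From mathcomp Require Import Rstruct.
From mathcomp.algebra_tactics Require Import ring lra.
From mathcomp Require Import zify.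
Import Order.TTheory GRing.Theory Num.Theory.
Local Open Scope ring_scope.
Set Implicit Arguments. Unset Strict Implicit.

(* If a walk from [v_1] keeps every height below [M], then each point [i] is
   reached before time [M / h_i]; hence the points of rate at least [rho] all
   lie on a prefix of the walk of length at most [M / rho], so their minimum
   spanning tree weighs at most [M / rho] and their Euler tour at most
   [2 M / rho].  Also [h_1 D <= 2 M], as the bamboo at [v_1] grows while the
   robot travels away from it.
   In Algorithm 2, a round over the [s] nonempty classes costs [O(s D)] and
   advances every tour [C_k] by at least [D], so a point of [V_k] is revisited
   within [O(s (D + |C_k|))] time (a potential argument).  As the rates in [V_k]
   are below twice its smallest one, all heights are [O(s M)], and
   [s <= 2 log2 (ceil (hmax / hmin))]. *)

Lemma modS_small M r : (r < M)%N -> (r.+1 %% M = if r.+1 == M then 0 else r.+1)%N.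
Proof.
move=> rM; case: eqP => [->|ne1]; first by rewrite modnn.
by rewrite modn_small // ltn_neqAle rM andbT; apply/eqP.
Qed.

Lemma absz_le (a b : int) : (0 <= a)%R -> (a <= b)%R -> (`|a| <= `|b|)%N.
Proof. by move=> a0 ab; lia. Qed.

Section Instance.
Variables (R : realType) (n : nat) (h : 'I_n -> R) (t : 'I_n -> 'I_n -> R).
Hypothesis hv : valid_instance h t.
Implicit Types i j l : 'I_n.

Lemma h_nonincr i j : (i <= j)%N -> h j <= h i.
Proof. by case: hv => H _ _ _ _; apply: H. Qed.
Lemma h_gt0 i : 0 < h i.
Proof. by case: hv => _ H _ _ _; apply: H. Qed.
Lemma t_gt0 i j : i != j -> 0 < t i j.
Proof. by case: hv => _ _ H _ _; apply: H. Qed.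
Lemma t_sym i j : t i j = t j i.
Proof. by case: hv => _ _ _ H _; apply: H. Qed.
Lemma dist_triangle i j l : dist t i l <= dist t i j + dist t j l.
Proof. by case: hv => _ _ _ _ H; apply: H. Qed.

Lemma distxx i : dist t i i = 0.
Proof. by rewrite /dist eqxx. Qed.
Lemma dist_neqE i j : i != j -> dist t i j = t i j.
Proof. by rewrite /dist => /negbTE ->. Qed.
Lemma dist_gt0 i j : i != j -> 0 < dist t i j.
Proof. by move=> ij; rewrite dist_neqE //; apply: t_gt0. Qed.
Lemma dist_ge0 i j : 0 <= dist t i j.
Proof. by case: (eqVneq i j) => [->|/dist_gt0/ltW//]; rewrite distxx. Qed.
Lemma distC i j : dist t i j = dist t j i.
Proof. by rewrite /dist eq_sym t_sym. Qed.

Lemma Dmax_ge0 : 0 <= Dmax t.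
Proof. by apply/bigmax_geP; left. Qed.

Lemma dist_le_Dmax i j : dist t i j <= Dmax t.
Proof.
rewrite /dist; case: ifPn => ij; first exact: Dmax_ge0.
apply/bigmax_geP; right; exists i => //.
by apply/bigmax_geP; right; exists j => //; rewrite eq_sym.
Qed.

Lemma Dmax_le B : 0 <= B -> (forall i j, i != j -> t i j <= B) -> Dmax t <= B.
Proof.
move=> B0 tB; apply: bigmax_le => // i _; apply: bigmax_le => // j ji.
by apply: tB; rewrite eq_sym.
Qed.

Section Walk.
Variable p : nat -> 'I_n.
Notation arr := (arrival t p).

Lemma arrival0 : arr 0 = 0.
Proof. by rewrite /arrival big_ord0. Qed.
Lemma arrivalS k : arr k.+1 = arr k + dist t (p k) (p k.+1).
Proof. by rewrite /arrival big_ord_recr. Qed.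

Lemma arrival_le k k' : (k <= k')%N -> arr k <= arr k'.
Proof.
move/subnKC <-; elim: (k' - k)%N => [|d IH]; first by rewrite addn0.
by rewrite addnS arrivalS; apply: le_trans IH _; rewrite lerDl dist_ge0.
Qed.

Lemma arrival_ge0 k : 0 <= arr k.
Proof. by rewrite -arrival0; apply: arrival_le. Qed.

Lemma dist_le_arrivalB k k' : (k <= k')%N -> dist t (p k) (p k') <= arr k' - arr k.
Proof.
move/subnKC <-; elim: (k' - k)%N => [|d IH]; first by rewrite addn0 distxx subrr.
rewrite addnS arrivalS; have := dist_triangle (p k) (p (k + d)%N) (p (k + d).+1); lra.
Qed.

Lemma has_sup_cut_times i x : 0 <= x ->
  has_sup [set y : R | y = 0 \/ exists k, [/\ p k = i, arr k = y & y <= x]]%classic.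
Proof.
move=> x0; split; first by exists 0; left.
by exists x => y [->|[k [_ _ ->]]].
Qed.

Lemma last_cut_ge0 i x : 0 <= x -> 0 <= last_cut t p i x.
Proof. by move=> x0; apply: (sup_upper_bound (has_sup_cut_times i x0)); left. Qed.

Lemma arrival_le_last_cut i x k : 0 <= x -> p k = i -> arr k <= x -> arr k <= last_cut t p i x.
Proof.
by move=> x0 pk ak; apply: (sup_upper_bound (has_sup_cut_times i x0)); right; exists k.
Qed.

Lemma last_cut_le i x y : 0 <= y ->
  (forall k, p k = i -> arr k <= x -> arr k <= y) -> last_cut t p i x <= y.
Proof.
move=> y0 Hy; apply: ge_sup; first by exists 0; left.
by move=> z [->|[k [pk <- ak]]] //; apply: Hy.
Qed.
End Walk.

Fixpoint path_len (x : 'I_n) (s : seq 'I_n) : R :=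
  if s is y :: s' then dist t x y + path_len y s' else 0.

Lemma path_len_ge0 x s : 0 <= path_len x s.
Proof. by elim: s x => [|y s IH] x //=; rewrite addr_ge0 ?dist_ge0. Qed.

Lemma path_len_detour x z s : path_len x s <= dist t x z + path_len z s.
Proof.
case: s => [|y s] /=; first by rewrite addr0 dist_ge0.
have := dist_triangle x z y; lra.
Qed.

Lemma path_len_subseq x s q : subseq s q -> path_len x s <= path_len x q.
Proof.
elim: q x s => [|z q IH] x [|y s] //=; rewrite ?addr_ge0 ?dist_ge0 ?path_len_ge0 //.
case: eqP => [->|_] sub; first by rewrite lerD2l; apply: IH.
have := IH z _ sub; have /= := path_len_detour x z (y :: s); lra.
Qed.

Lemma path_len_subseq_cons y s z q : subseq (y :: s) (z :: q) -> path_len y s <= path_len z q.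
Proof.
rewrite /=; case: eqP => [->|_] sub; first exact: path_len_subseq.
by apply: le_trans (path_len_subseq z sub); rewrite /= lerDr dist_ge0.
Qed.

Lemma arrival_path_len (p : nat -> 'I_n) a K :
  arrival t p (a + K) - arrival t p a = path_len (p a) (map p (iota a.+1 K)).
Proof.
elim: K a => [|K IH] a /=; first by rewrite addn0 subrr.
by rewrite -IH addnS -addSn arrivalS; have := arrivalS p a; lra.
Qed.
End Instance.

Section PathTree.
Variables (R : realType) (n : nat) (h : 'I_n -> R) (t : 'I_n -> 'I_n -> R).
Hypothesis hv : valid_instance h t.

Definition edge_of (a b : 'I_n) : 'I_n * 'I_n := if (a < b)%N then (a, b) else (b, a).

Lemma adj_edge_of (E : {set 'I_n * 'I_n}) a b : edge_of a b \in E -> adj E a b.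
Proof. by rewrite /adj /edge_of; case: ifP => _ ->; rewrite ?orbT. Qed.

Lemma t_edge_of a b : a != b -> t (edge_of a b).1 (edge_of a b).2 = dist t a b.
Proof. by move=> ab; rewrite dist_neqE // /edge_of; case: ifP => //= _; rewrite (t_sym hv). Qed.

Lemma edge_ofP a b c d : edge_of a b = edge_of c d -> (a = c /\ b = d) \/ (a = d /\ b = c).
Proof. by rewrite /edge_of; case: ifP => _; case: ifP => _ [-> ->]; tauto. Qed.

Lemma edge_of_ltn a b : a != b -> ((edge_of a b).1 < (edge_of a b).2)%N.
Proof. by rewrite /edge_of neq_ltn; case: ltnP => //= ba /orP [//|]; rewrite ltnNge ba. Qed.

Lemma edge_of_in (S : {set 'I_n}) a b : a \in S -> b \in S ->
  ((edge_of a b).1 \in S) && ((edge_of a b).2 \in S).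
Proof. by rewrite /edge_of; case: ifP => /= _ -> ->. Qed.

Lemma spanning_adj_neq (S : {set 'I_n}) (E : {set 'I_n * 'I_n}) a b :
  is_spanning_tree S E -> adj E a b -> a != b.
Proof. by case=> HE _ _ /orP [] /HE /andP [ab _]; rewrite neq_ltn ab ?orbT. Qed.

Lemma spanning_incident (S : {set 'I_n}) (E : {set 'I_n * 'I_n}) j :
  is_spanning_tree S E -> (2 <= #|S|)%N -> j \in S -> exists y, adj E j y.
Proof.
case=> _ _ Hconn S2 jS.
have [j' /setD1P [j'j j'S]] : exists j', j' \in S :\ j.
  by apply/set0Pn; rewrite -card_gt0; move: S2; rewrite (cardsD1 j) jS add1n ltnS.
case/connectP: (Hconn j j' jS j'S) => [[_ /= jE|y pth /= /andP [jy _] _]].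
  by rewrite jE eqxx in j'j.
by exists y.
Qed.

Lemma path_lenE x0 y s :
  path_len t y s = \sum_(i < size s) dist t (nth x0 (y :: s) i) (nth x0 (y :: s) i.+1).
Proof.
elim: s y => [|z s IH] y /=; first by rewrite big_ord0.
by rewrite big_ord_recl /= IH.
Qed.

Variables (y : 'I_n) (s : seq 'I_n).
Hypothesis us : uniq (y :: s).
Notation c := (y :: s).

Definition path_edges : {set 'I_n * 'I_n} :=
  [set edge_of (nth y c i) (nth y c i.+1) | i : 'I_(size s)].

Lemma path_step_neq (i : 'I_(size s)) : nth y c i != nth y c i.+1.
Proof.
have lt1 : (i < size c)%N by rewrite /= ltnS ltnW.
have lt2 : (i.+1 < size c)%N by rewrite /= ltnS.
by rewrite (nth_uniq y lt1 lt2 us) neq_ltn ltnSn.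
Qed.

Lemma path_edges_inj : injective (fun i : 'I_(size s) => edge_of (nth y c i) (nth y c i.+1)).
Proof.
have lt1 (i : 'I_(size s)) : (i < size c)%N by rewrite /= ltnS ltnW.
have lt2 (i : 'I_(size s)) : (i.+1 < size c)%N by rewrite /= ltnS.
move=> i j /edge_ofP [[/eqP e1 _]|[/eqP e1 /eqP e2]]; apply/val_inj.
  by apply/eqP; rewrite -(nth_uniq y (lt1 i) (lt1 j) us).
move: e1 e2; rewrite (nth_uniq y (lt1 i) (lt2 j) us) (nth_uniq y (lt2 i) (lt1 j) us).
by move=> /eqP e1 /eqP e2; lia.
Qed.

Lemma path_edges_weight : tree_weight t path_edges = path_len t y s.
Proof.
rewrite /tree_weight big_imset /=; last by move=> i j _ _ /path_edges_inj.
rewrite (path_lenE y); apply: eq_bigr => i _; exact/t_edge_of/path_step_neq.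
Qed.

Lemma path_edges_connect k : (k < size c)%N -> connect (adj path_edges) y (nth y c k).
Proof.
elim: k => [|k IH] Hk; first exact: connect0.
apply: connect_trans (IH (ltnW Hk)) (connect1 _).
have Hk' : (k < size s)%N by rewrite -ltnS.
by apply: adj_edge_of; apply/imsetP; exists (Ordinal Hk').
Qed.

Lemma path_edges_spanning (S : {set 'I_n}) : S =i c -> is_spanning_tree S path_edges.
Proof.
move=> eS; split.
- move=> e /imsetP [i _ ->].
  have inS k : (k < size c)%N -> nth y c k \in S by move=> Hk; rewrite eS mem_nth.
  by rewrite edge_of_ltn ?path_step_neq // edge_of_in // inS //= ltnS // ltnW.
- by rewrite card_imset ?card_ord ?(eq_card eS) ?(card_uniqP us) //; apply: path_edges_inj.
- have sym : connect_sym (adj path_edges) by apply: sym_connect_sym => a b; rewrite /adj orbC.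
  move=> a b; rewrite !eS => /(nthP y) [ka Hka <-] /(nthP y) [kb Hkb <-].
  by apply: connect_trans (path_edges_connect Hkb); rewrite sym; apply: path_edges_connect.
Qed.
End PathTree.

Section LowerBound.
Variables (R : realType) (n : nat) (h : 'I_n -> R) (t : 'I_n -> 'I_n -> R).
Hypothesis hv : valid_instance h t.
Variables (p : nat -> 'I_n) (M : R).
Hypothesis HM : forall i x, 0 <= x -> height h t p i x <= M.
Notation arr := (arrival t p).

Lemma height_bound_ge0 (i : 'I_n) : 0 <= M.
Proof.
apply: le_trans (HM i (lexx 0)); rewrite /height.
have : last_cut t p i 0 <= 0 by apply: last_cut_le => // k _; apply.
have := h_gt0 hv i; nra.
Qed.

Lemma bounded_walk_visits i : exists k, p k == i.
Proof.
apply/not_existsP => never.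
have M0 := height_bound_ge0 i; have hi := h_gt0 hv i.
set x := M / h i + 1.
have x0 : 0 <= x by rewrite /x addr_ge0 // divr_ge0 // ltW.
have : last_cut t p i x <= 0.
  by apply: last_cut_le => // k /eqP pk; have := never k; rewrite pk.
have : h i * x = M + h i by rewrite /x mulrDr mulrCA divff ?mulr1 ?gt_eqF.
have := HM i x0; rewrite /height; nra.
Qed.

Definition first_visit i : nat := ex_minn (bounded_walk_visits i).

Lemma first_visitP i : p (first_visit i) = i.
Proof. by rewrite /first_visit; case: ex_minnP => k /eqP. Qed.

Lemma first_visit_min i k : p k = i -> (first_visit i <= k)%N.
Proof. by rewrite /first_visit; case: ex_minnP => k0 _ min /eqP /min. Qed.

Lemma arrival_first_visit_le i : arr (first_visit i) <= M / h i.
Proof.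
have M0 := height_bound_ge0 i; have hi := h_gt0 hv i.
rewrite leNgt; apply/negP => late.
have Mh : 0 <= M / h i by rewrite divr_ge0 // ltW.
set x := (M / h i + arr (first_visit i)) / 2.
have x0 : 0 <= x by rewrite /x; have := arrival_ge0 hv p (first_visit i); lra.
have : last_cut t p i x <= 0.
  apply: last_cut_le => // k pk ak.
  have := arrival_le hv p (first_visit_min pk); rewrite /x in ak; lra.
have : h i * (M / h i) < h i * x by rewrite ltr_pM2l // /x; lra.
have : h i * (M / h i) = M by rewrite mulrCA divff ?mulr1 ?gt_eqF.
have := HM i x0; rewrite /height; nra.
Qed.

(* The start point was cut at time 0, so at the arrival time at [p k] its
   bamboo has grown for at least the distance back to [p 0]. *)
Lemma dist_from_start_le k : h (p 0) * dist t (p 0) (p k) <= M.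
Proof.
set x := arr k.
have x0 : 0 <= x := arrival_ge0 hv p k.
have : last_cut t p (p 0) x <= x - dist t (p 0) (p k).
  apply: last_cut_le => [|k' pk' ak'].
    by have := dist_le_arrivalB hv p (leq0n k); rewrite arrival0 subr0 /x; lra.
  case: (leqP k' k) => kk.
    by have := dist_le_arrivalB hv p kk; rewrite pk' /x; lra.
  have := dist_le_arrivalB hv p (ltnW kk); rewrite pk' (distC hv).
  by rewrite /x in ak' *; have := dist_ge0 hv (p 0) (p k); lra.
have := HM (p 0) x0; have := h_gt0 hv (p 0); rewrite /height; nra.
Qed.

Lemma Dmax_height_bound : h (p 0) * Dmax t <= 2 * M.
Proof.
have hp := h_gt0 hv (p 0); have M0 := height_bound_ge0 (p 0).
rewrite -ler_pdivlMl //; apply: Dmax_le => [|a b ab].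
  by apply: mulr_ge0; [rewrite invr_ge0 ltW | lra].
rewrite -(dist_neqE t ab) ler_pdivlMl //.
have := dist_from_start_le (first_visit a); have := dist_from_start_le (first_visit b).
rewrite !first_visitP => Hb Ha.
have : h (p 0) * dist t a b <= h (p 0) * (dist t (p 0) a + dist t (p 0) b).
  by rewrite ler_pM2l // -(distC hv a) (dist_triangle hv).
lra.
Qed.

(* Listing the points of [S] in order of first visit gives a path inside the
   walk prefix up to the last first visit, which ends before time [M / rho]. *)
Lemma spanning_tree_weight_le (S : {set 'I_n}) (rho : R) : 0 < rho -> S != finset.set0 ->
  (forall i, i \in S -> rho <= h i) ->
  exists E, is_spanning_tree S E /\ tree_weight t E <= M / rho.
Proof.
move=> rho0; rewrite -card_gt0 => Sne rhoS.
have [i0 i0S Kdef] := eq_bigmax_cond first_visit (Sne : (0 < #|S|)%N).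
set K := (\max_(i in S) first_visit i)%N in Kdef.
set s := undup [seq x <- map p (iota 0 K.+1) | x \in S].
have sS : S =i s.
  move=> x; rewrite mem_undup mem_filter; apply/idP/andP => [xS|[] //]; split => //.
  apply/mapP; exists (first_visit x); last by rewrite first_visitP.
  by rewrite mem_iota add0n ltnS; apply: leq_bigmax_cond.
have us : uniq s := undup_uniq _.
case Es : s sS us => [|y s'] sS us.
  by move: Sne; rewrite card_gt0 => /set0Pn [x]; rewrite sS.
exists (path_edges y s'); split; first exact: path_edges_spanning.
rewrite (path_edges_weight hv) //.
have sub : subseq (y :: s') (p 0 :: map p (iota 1 K)).
  by rewrite -Es; apply: subseq_trans (undup_subseq _) (filter_subseq _ _).
apply: le_trans (path_len_subseq_cons hv sub) _.
have := arrival_path_len t p 0 K; rewrite add0n arrival0 subr0 => <-.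
rewrite Kdef; apply: le_trans (arrival_first_visit_le i0) _.
apply: ler_wpM2l; first exact: height_bound_ge0 i0.
by rewrite lef_pV2 ?posrE ?(h_gt0 hv) ?rhoS.
Qed.
End LowerBound.

Section Tour.
Variables (R : realType) (n : nat) (h : 'I_n -> R) (t : 'I_n -> 'I_n -> R).
Hypothesis hv : valid_instance h t.
Variables (x0 : 'I_n) (c : seq 'I_n).

Definition tour_edge_len (i : nat) : R :=
  dist t (nth x0 c (i %% size c)) (nth x0 c (i.+1 %% size c)).

Definition tour_len : R := \sum_(i < size c) tour_edge_len i.

Lemma tour_edge_len_ge0 i : 0 <= tour_edge_len i.
Proof. exact: dist_ge0 hv _ _. Qed.

Lemma tour_edge_lenD i : tour_edge_len (i + size c) = tour_edge_len i.
Proof. by rewrite /tour_edge_len -addSn !modnDr. Qed.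

Lemma tour_len_shift r : \sum_(i < size c) tour_edge_len (r + i) = tour_len.
Proof.
elim: r => [|r IH]; first by apply: eq_bigr => i _; rewrite add0n.
rewrite -IH; case Ec: (size c) => [|m]; first by rewrite !big_ord0.
rewrite big_ord_recr big_ord_recl /= addn0 addrC.
have -> : (r.+1 + m = r + size c)%N by rewrite Ec addnS addSn.
rewrite tour_edge_lenD; congr (_ + _); apply: eq_bigr => i _.
by rewrite /bump /= add1n addnS addSn.
Qed.

Lemma tour_arc_len_le r K : (K <= size c)%N ->
  \sum_(0 <= i < K) tour_edge_len (r + i) <= tour_len.
Proof.
move=> Kc; rewrite -(tour_len_shift r) -(big_mkord xpredT (fun i => tour_edge_len (r + i))).
rewrite (@big_cat_nat _ _ _ K 0 (size c)) //= lerDl.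
by apply: sumr_ge0 => i _; apply: tour_edge_len_ge0.
Qed.

Lemma nth_rot1 i : (i < size c)%N -> nth x0 (rot 1 c) i = nth x0 c (i.+1 %% size c).
Proof.
case: c => [|y c'] //= ic; rewrite rot1_cons nth_rcons.
case: (ltnP i (size c')) => ic'; first by rewrite modn_small ?ltnS.
have -> : i = size c' by apply/eqP; rewrite eqn_leq ic' -ltnS ic.
by rewrite modnn eqxx.
Qed.

Lemma tour_len_zip : tour_len = \sum_(q <- zip c (rot 1 c)) dist t q.1 q.2.
Proof.
rewrite (big_nth (x0, x0)) size_zip size_rot minnn big_mkord.
apply: eq_bigr => i _; rewrite nth_zip ?size_rot //= nth_rot1 //.
by rewrite /tour_edge_len modn_small.
Qed.

Definition traverses (q e : 'I_n * 'I_n) : bool := (q == e) || ((q.2, q.1) == e).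

Lemma dist_le_traversed (E : {set 'I_n * 'I_n}) q :
  (forall e, e \in E -> (e.1 < e.2)%N) -> adj E q.1 q.2 ->
  dist t q.1 q.2 <= \sum_(e in E | traverses q e) t e.1 e.2.
Proof.
move=> HE Eq.
have [e [eE qe ->]] : exists e, [/\ e \in E, traverses q e & dist t q.1 q.2 = t e.1 e.2].
  have q12 : q.1 != q.2 by case/orP: Eq => /HE; rewrite neq_ltn => ->; rewrite ?orbT.
  case/orP: Eq => qE; [exists (q.1, q.2) | exists (q.2, q.1)]; rewrite dist_neqE //.
    by split => //=; rewrite /traverses -surjective_pairing eqxx.
  by split => //=; [rewrite /traverses eqxx orbT | rewrite (t_sym hv)].
rewrite (bigD1 e) ?eE //= lerDl; apply: sumr_ge0 => e' /andP [/andP [/HE e'E _] _].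
by apply/ltW/(t_gt0 hv); rewrite neq_ltn e'E.
Qed.

Lemma euler_tour_len_le (E : {set 'I_n * 'I_n}) :
  (forall e, e \in E -> (e.1 < e.2)%N) -> euler_tour E c ->
  tour_len <= 2 * tree_weight t E.
Proof.
move=> HE [_ /allP Hadj Hcnt]; rewrite tour_len_zip.
apply: le_trans (_ : \sum_(q <- zip c (rot 1 c)) \sum_(e in E | traverses q e) t e.1 e.2 <= _).
  by rewrite big_seq [X in _ <= X]big_seq; apply: ler_sum => q /Hadj; apply: dist_le_traversed.
under eq_bigr => q _ do rewrite big_mkcondr /=.
rewrite exchange_big /tree_weight mulr_sumr; apply: ler_sum => e eE.
by rewrite -big_mkcond /= big_const_seq Hcnt //= addr0 mulr2n mulrDl mul1r.
Qed.
End Tour.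

Section Classes.
Variables (R : realType) (n : nat) (hn : (1 < n)%N).
Variables (h : 'I_n -> R) (t : 'I_n -> 'I_n -> R).
Hypothesis hv : valid_instance h t.
Hypothesis hlt : hmin hn h < hmax hn h.
Notation ne := (ne_cls hn h).

Lemma hmin_gt0 : 0 < hmin hn h.
Proof. exact: h_gt0 hv _. Qed.

Lemma hmin_le j : hmin hn h <= h j.
Proof. by apply: (h_nonincr hv); rewrite /= -ltnS prednK ?ltn_ord // ltnW. Qed.

Lemma hmax_ge j : h j <= hmax hn h.
Proof. exact: h_nonincr hv _ _ _. Qed.

Lemma ln2_gt0 : 0 < ln (2 : R).
Proof. by rewrite ln_gt0 // ltr1n. Qed.

Lemma log2_ge0 (x : R) : 1 <= x -> 0 <= log2 x.
Proof.
rewrite le_eqVlt => /orP [/eqP <-|x1]; first by rewrite /log2 ln1 mul0r.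
by apply: divr_ge0; apply/ltW; [exact: ln_gt0 | exact: ln2_gt0].
Qed.

Lemma log2_le (x y : R) : 0 < x -> x <= y -> log2 x <= log2 y.
Proof.
move=> x0 xy; rewrite /log2 ler_pM2r ?invr_gt0 ?ln2_gt0 //.
by rewrite ler_ln // posrE //; apply: lt_le_trans xy.
Qed.

Lemma ln_exp2 k : ln ((2 : R) ^+ k) = k%:R * ln 2.
Proof. by rewrite lnXn // mulr_natl. Qed.

Lemma exp2_bounds_of_log2 (x : R) k : 0 < x -> k%:R <= log2 x < k%:R + 1 ->
  2 ^+ k <= x < 2 ^+ k.+1.
Proof.
move=> x0 /andP [f1 f2]; have l2 := ln2_gt0.
rewrite /log2 ler_pdivlMr // ltr_pdivrMr // in f1 f2.
rewrite -ler_ln ?posrE ?exprn_gt0 // -ltr_ln ?posrE ?exprn_gt0 // !ln_exp2.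
by rewrite -[k.+1]addn1 natrD; apply/andP; split; lra.
Qed.

(* The class of [j] is [floor (log2 (h j / hmin))]. *)
Lemma exists_class j : exists2 k, (k < nclasses hn h)%N & j \in Vcls hn h k.
Proof.
have hm := hmin_gt0; set x := h j / hmin hn h.
have x1 : 1 <= x by rewrite /x ler_pdivlMr // mul1r hmin_le.
have fl0 : (0 <= Num.floor (log2 x))%R by rewrite floor_ge0 log2_ge0.
set k := `|Num.floor (log2 x)|%N.
have kE : (k%:R : R) = (Num.floor (log2 x))%:~R by rewrite /k -[in RHS](gez0_abs fl0).
have flx : k%:R <= log2 x < k%:R + 1 by rewrite kE -intrD1 floor_itv.
exists k.
  rewrite /nclasses ltnS /k; apply: absz_le => //; apply: le_floor.
  by rewrite log2_le ?ler_pM2r ?invr_gt0 ?hmax_ge //; lra.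
rewrite inE -ler_pdivlMr // -ltr_pdivrMr // -/x.
by apply: exp2_bounds_of_log2 => //; lra.
Qed.

Lemma mem_ne_cls k : (k \in ne) = (k < nclasses hn h)%N && (Vcls hn h k != finset.set0).
Proof. by rewrite /ne_cls mem_filter mem_iota add0n andbC. Qed.

Lemma ne_cls_uniq : uniq ne.
Proof. by rewrite /ne_cls filter_uniq // iota_uniq. Qed.

Lemma exists_ne_cls j : exists2 q, (q < size ne)%N & j \in Vcls hn h (nth 0%N ne q).
Proof.
have [k kn jk] := exists_class j.
have kin : k \in ne by rewrite mem_ne_cls kn; apply/set0Pn; exists j.
by exists (index k ne); rewrite ?index_mem ?nth_index.
Qed.

Lemma size_ne_cls_gt0 : (0 < size ne)%N.
Proof. by have [q qL _] := exists_ne_cls (last_pt hn); apply: leq_ltn_trans qL. Qed.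

(* [s <= log2 r + 1 <= 2 log2 (ceil r)] because [ceil r >= 2]. *)
Lemma size_ne_cls_le :
  (size ne)%:R <= 2 * log2 ((Num.ceil (hmax hn h / hmin hn h))%:~R : R).
Proof.
have hm := hmin_gt0; set r := hmax hn h / hmin hn h.
have r1 : 1 < r by rewrite /r ltr_pdivlMr // mul1r.
have l2 := ln2_gt0.
have c2 : (2 : R) <= (Num.ceil r)%:~R.
  have : (1 < Num.ceil r)%R by rewrite (ceil_gt_int r 1).
  by rewrite (_ : 2 = (2%:Z)%:~R) // ler_int.
have cr : r <= (Num.ceil r)%:~R := ceil_ge r.
have lc1 : 1 <= log2 ((Num.ceil r)%:~R : R).
  by rewrite /log2 ler_pdivlMr // mul1r ler_ln ?posrE //; lra.
have lr : log2 r <= log2 ((Num.ceil r)%:~R : R) by apply: log2_le => //; lra.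
have fl0 : (0 <= Num.floor (log2 r))%R by rewrite floor_ge0 log2_ge0 // ltW.
have nc : (nclasses hn h)%:R <= log2 r + 1.
  rewrite /nclasses -/r -addn1 natrD lerD2r.
  have -> : ((`|Num.floor (log2 r)|%N)%:R : R) = (Num.floor (log2 r))%:~R.
    by rewrite -[in RHS](gez0_abs fl0).
  exact: floor_le.
have : (size ne)%:R <= (nclasses hn h)%:R :> R.
  by rewrite ler_nat /ne_cls size_filter -[X in (_ <= X)%N](size_iota 0) count_size.
lra.
Qed.
End Classes.

Section Gap.
Variables (R : realType) (n : nat) (h : 'I_n -> R) (t : 'I_n -> 'I_n -> R).
Hypothesis hv : valid_instance h t.
Variable p : nat -> 'I_n.
Notation arr := (arrival t p).

Lemma arrival_unbounded (a b : 'I_n) : a != b ->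
  (forall k, exists k', (k < k')%N /\ p k' = a) ->
  (forall k, exists k', (k < k')%N /\ p k' = b) ->
  forall x, exists k, x < arr k.
Proof.
move=> ab Ha Hb.
have dab := dist_gt0 hv ab.
have round_trip k : exists k', arr k + dist t a b <= arr k'.
  have [k1 [kk1 pk1]] := Ha k; have [k2 [k12 pk2]] := Hb k1.
  exists k2; have := dist_le_arrivalB hv p (ltnW k12); rewrite pk1 pk2.
  have := arrival_le hv p (ltnW kk1); lra.
have many N : exists k, N%:R * dist t a b <= arr k.
  elim: N => [|N [k Hk]]; first by exists 0%N; rewrite mul0r (arrival_ge0 hv).
  have [k' Hk'] := round_trip k; exists k'; rewrite -natr1 mulrDl mul1r; lra.
move=> x; have [k Hk] := many (Num.truncn (x / dist t a b)).+1; exists k.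
by apply: lt_le_trans Hk; rewrite -ltr_pdivrMr // truncnS_gt.
Qed.

(* At time [x >= G], the last visit to [i] before [x - G] is followed by another
   one before time [x]. *)
Lemma height_le_gap (i : 'I_n) (G : R) : 0 <= G ->
  (forall k, exists k', [/\ (k < k')%N, p k' = i & arr k' - arr k <= G]) ->
  (forall x, exists k, x < arr k) ->
  forall x, 0 <= x -> height h t p i x <= h i * G.
Proof.
move=> G0 Hgap Hunb x x0; rewrite /height ler_pM2l ?(h_gt0 hv) //.
case: (lerP x G) => xG; first by have := last_cut_ge0 t p i x0; lra.
set y := x - G.
have exP : exists k, arr k <= y by exists 0%N; rewrite arrival0 /y; lra.
have [B HB] := Hunb y.
have ubP k : arr k <= y -> (k <= B)%N.
  by move=> Hk; rewrite leqNgt; apply/negP => /ltnW/(arrival_le hv p); lra.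
have [km Pkm Hmax] := ex_maxnP exP ubP.
have [k' [kk' pk' ak']] := Hgap km.
have nP : y < arr k' by rewrite ltNge; apply/negP => /Hmax; rewrite leqNgt kk'.
have := arrival_le_last_cut x0 pk' (_ : arr k' <= x); rewrite /y in nP Pkm; lra.
Qed.
End Gap.

Section Algorithm.
Variables (R : realType) (n : nat) (hn : (1 < n)%N).
Variables (h : 'I_n -> R) (t : 'I_n -> 'I_n -> R).
Hypothesis hv : valid_instance h t.
Variables (tour : nat -> seq 'I_n) (m0 : nat -> nat).
Hypothesis Hch : alg_choices hn h t tour m0.
Hypothesis hlt : hmin hn h < hmax hn h.
Notation ne := (ne_cls hn h).
Notation L := (size ne).
Notation D := (Dmax t).
Notation x0 := (first_pt hn).

Section Class.
Variable k : nat.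
Hypothesis kne : k \in ne.
Notation V := (Vcls hn h k).
Notation c := (tour k).

Lemma alg_choices_ne : [/\ (#|V| = 1%N -> c = enum V),
  ((2 <= #|V|)%N -> exists E, is_MST t V E /\ euler_tour E c) & (m0 k < size c)%N].
Proof. by move: kne; rewrite mem_ne_cls => /andP [kn Vne]; apply: Hch. Qed.

Lemma class_card_gt0 : (0 < #|V|)%N.
Proof. by move: kne; rewrite mem_ne_cls card_gt0 => /andP []. Qed.

Lemma size_tour_gt0 : (0 < size c)%N.
Proof. by case: alg_choices_ne => _ _; apply: leq_ltn_trans. Qed.

Lemma tour_singleton j : (#|V| < 2)%N -> j \in V -> c = [:: j].
Proof.
move=> V2 jV; have V1 : #|V| = 1%N by move: class_card_gt0 V2; case: #|V| => [|[|]].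
case: alg_choices_ne => /(_ V1) -> _ _.
by case/cards1P: (introT eqP V1) => x Vx; move: jV; rewrite Vx inE => /eqP ->; rewrite enum_set1.
Qed.

Lemma tour_step_neq i : (2 <= #|V|)%N -> (i < size c)%N ->
  nth x0 c i != nth x0 c (i.+1 %% size c).
Proof.
move=> V2 ic; case: alg_choices_ne => _ /(_ V2) [E [[ET _] [_ Hadj _]]] _.
have iz : (i < size (zip c (rot 1 c)))%N by rewrite size_zip size_rot minnn.
have := all_nthP (x0, x0) Hadj i iz; rewrite nth_zip ?size_rot //= nth_rot1 //.
exact: spanning_adj_neq ET.
Qed.

Lemma mem_tour j : j \in V -> j \in c.
Proof.
move=> jV; case: (ltnP #|V| 2) => V2; first by rewrite (tour_singleton V2 jV) mem_head.
case: alg_choices_ne => _ /(_ V2) [E [[ET _] [_ _ Hcnt]]] _.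
have [y jy] := spanning_incident ET V2 jV.
have [e eE je] : exists2 e, e \in E & (e == (j, y)) || (e == (y, j)).
  by case/orP: jy => jyE; [exists (j, y) | exists (y, j)]; rewrite ?eqxx ?orbT.
have : has (fun q => traverses q e) (zip c (rot 1 c)).
  by rewrite has_count [count _ _]Hcnt.
case/hasP => q /(nthP (x0, x0)) [i]; rewrite size_zip size_rot minnn => ic <-.
rewrite nth_zip ?size_rot // /traverses /=.
have m1 : nth x0 c i \in c by rewrite mem_nth.
have m2 : nth x0 (rot 1 c) i \in c by rewrite -(mem_rot 1) mem_nth ?size_rot.
by case/orP: je => /eqP -> /orP [] /eqP [e1 e2]; rewrite -?e1 -?e2.
Qed.

Lemma tree_weight_ge0 (E : {set 'I_n * 'I_n}) : is_spanning_tree V E -> 0 <= tree_weight t E.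
Proof.
case=> HE _ _; apply: sumr_ge0 => e /HE /andP [e12 _].
by apply/ltW/(t_gt0 hv); rewrite neq_ltn e12.
Qed.

Lemma tour_len_le_tree (F : {set 'I_n * 'I_n}) : is_spanning_tree V F ->
  tour_len t x0 c <= 2 * tree_weight t F.
Proof.
move=> FT; case: (ltnP #|V| 2) => V2.
  have /card_gt0P [j jV] := class_card_gt0.
  rewrite /tour_len (tour_singleton V2 jV) /= big_ord1 /tour_edge_len /= distxx.
  by rewrite mulr_ge0 ?tree_weight_ge0.
case: alg_choices_ne => _ /(_ V2) [E [[ET Emin] Heu]] _.
apply: le_trans (euler_tour_len_le hv x0 _ Heu) _; last by rewrite ler_pM2l // Emin.
by case: ET => HE _ _ e /HE /andP [].
Qed.
End Class.

Notation stp := (step hn h t tour).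
Notation pw := (alg_walk hn h t tour m0).

Definition alg_state (m : nat) : state R n := iter m stp (State 0 m0 false 0 x0).

Definition alg_inv (st : state R n) : Prop := [/\ (st_ph st < L)%N,
  (forall q, (q < L)%N -> (st_mk st (nth 0%N ne q) < size (tour (nth 0%N ne q)))%N) &
  (st_walking st -> [/\ (2 <= #|Vcls hn h (nth 0%N ne (st_ph st))|)%N,
     st_cur st = nth x0 (tour (nth 0%N ne (st_ph st))) (st_mk st (nth 0%N ne (st_ph st))),
     0 <= st_acc st & st_acc st < D])].

Lemma nth_ne_cls q : (q < L)%N -> nth 0%N ne q \in ne.
Proof. exact: mem_nth. Qed.

Lemma next_phase_lt ph : (ph.+1 %% L < L)%N.
Proof. by rewrite ltn_pmod // (size_ne_cls_gt0 hn hv). Qed.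

Lemma first_last_neq : x0 != last_pt hn.
Proof. by apply/eqP => /(congr1 val) /= E; move: hn; rewrite -(prednK (ltnW hn)) -E. Qed.

Lemma Dmax_gt0 : 0 < D.
Proof. exact: lt_le_trans (dist_gt0 hv first_last_neq) (dist_le_Dmax _ _ _). Qed.

Lemma alg_inv_step st : alg_inv st -> alg_inv (stp st).
Proof.
case: st => ph mk w acc cur [/= Hph Hmk Hw]; rewrite /step /=.
set k := nth 0%N ne ph.
have sz := size_tour_gt0 (nth_ne_cls Hph).
case: w Hw => Hw /=; last first.
  case: ifP => V2; split => //=; last exact: next_phase_lt.
  by move=> _; rewrite (set_nth_default x0) ?Hmk ?Dmax_gt0.
have [V2 Hcur a0 aD] := Hw erefl.
set r := ((mk k).+1 %% size (tour k))%N.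
have rlt : (r < size (tour k))%N by rewrite ltn_pmod.
have Hmk' q : (q < L)%N ->
    ((if nth 0%N ne q == k then r else mk (nth 0%N ne q)) < size (tour (nth 0%N ne q)))%N.
  by move=> qL; case: eqP => [->|_]; [exact: rlt | exact: Hmk].
case: ifP => HD; split => //=; first exact: next_phase_lt.
move=> _; rewrite eqxx; split => //; first by rewrite (set_nth_default x0).
  by rewrite addr_ge0 // (dist_ge0 hv).
by rewrite ltNge HD.
Qed.

Lemma alg_inv_state m : alg_inv (alg_state m).
Proof.
elim: m => [|m IH]; last by rewrite /alg_state iterS; apply: alg_inv_step.
split => //=; first exact: (size_ne_cls_gt0 hn hv).
by move=> q /nth_ne_cls kin; case: (alg_choices_ne kin).
Qed.

Definition closest_pair : 'I_n * 'I_n :=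
  [arg min_(q < (x0, last_pt hn) | q.1 != q.2) dist t q.1 q.2]%O.

(* Every step before [j] is reached lowers the potential by at least this much. *)
Definition min_step : R := Num.min D (dist t closest_pair.1 closest_pair.2).

Lemma closest_pairP : closest_pair.1 != closest_pair.2 /\
  forall a b : 'I_n, a != b -> dist t closest_pair.1 closest_pair.2 <= dist t a b.
Proof.
rewrite /closest_pair; case: arg_minP => [|q Pq Hm]; first exact: first_last_neq.
by split => // a b ab; apply: (Hm (a, b)).
Qed.

Lemma min_step_gt0 : 0 < min_step.
Proof. by case: closest_pairP => H _; rewrite /min_step lt_min Dmax_gt0 (dist_gt0 hv). Qed.

Lemma min_step_le_Dmax : min_step <= D.
Proof. by rewrite /min_step ge_min lexx. Qed.

Lemma min_step_le_dist a b : a != b -> min_step <= dist t a b.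
Proof. by move=> ab; case: closest_pairP => _ H; rewrite /min_step ge_min H ?orbT. Qed.

Section Target.
Variables (j : 'I_n) (qj pos : nat).
Hypothesis qjL : (qj < L)%N.
Notation kj := (nth 0%N ne qj).
Notation c := (tour kj).
Notation m := (size c).
Hypothesis jV : j \in Vcls hn h kj.
Hypothesis posL : (pos < m)%N.
Hypothesis posj : nth x0 c pos = j.

Definition arc_steps (r : nat) : nat := if (r <= pos)%N then (pos - r)%N else (pos + m - r)%N.

Definition arc_len (r : nat) : R := \sum_(0 <= i < arc_steps r) tour_edge_len t x0 c (r + i).

Definition phases_to_target (ph : nat) : nat :=
  if (ph <= qj)%N then (qj - ph)%N else (qj + L - ph)%N.

Notation tlen := (tour_len t x0 c).

Lemma arc_len_ge0 r : 0 <= arc_len r.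
Proof. by apply: sumr_ge0 => i _; exact: (tour_edge_len_ge0 hv). Qed.

Lemma arc_len_le r : (r < m)%N -> arc_len r <= tlen.
Proof. by move=> rm; apply: (tour_arc_len_le hv); rewrite /arc_steps; case: ifP => H; lia. Qed.

Lemma arc_len_step r : (r < m)%N -> r != pos ->
  arc_len r = dist t (nth x0 c r) (nth x0 c (r.+1 %% m)) + arc_len (r.+1 %% m).
Proof.
move=> rm rp.
have K1 : (0 < arc_steps r)%N by rewrite /arc_steps; case: ifP => H; lia.
rewrite /arc_len big_ltn // addn0 /tour_edge_len (modn_small rm); congr (_ + _).
rewrite big_add1 modS_small //.
have -> : (arc_steps r).-1 = arc_steps (if r.+1 == m then 0 else r.+1)%N.
  by rewrite /arc_steps; case: eqP => E; rewrite ?leq0n ?subn0 /=;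
    case: (leqP r pos) => H1; try case: (leqP r.+1 pos) => H2; lia.
apply: eq_bigr => i _; case: eqP => E; last by rewrite addSn addnS.
have -> : (r + i.+1 = i + m)%N by lia.
by rewrite add0n -addSn !modnDr.
Qed.

Lemma phases_to_target_qj : phases_to_target qj = 0%N.
Proof. by rewrite /phases_to_target leqnn subnn. Qed.

Lemma phases_to_target_le ph : (ph < L)%N -> ((phases_to_target ph)%:R : R) <= L%:R - 1.
Proof.
move=> phL; have L0 := size_ne_cls_gt0 hn hv.
rewrite -[in X in _ <= X](prednK L0) -natr1 addrK ler_nat /phases_to_target.
by case: ifP => H; lia.
Qed.

Lemma phases_to_target_next ph : (ph < L)%N -> ph != qj ->
  (phases_to_target (ph.+1 %% L)).+1 = phases_to_target ph.
Proof.
move=> phL pq; rewrite modS_small // /phases_to_target; case: eqP => E;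
  rewrite ?leq0n ?subn0 /=; case: (leqP ph qj) => H1; try case: (leqP ph.+1 qj) => H2; lia.
Qed.

Lemma phases_to_target_after : ((phases_to_target (qj.+1 %% L))%:R : R) = L%:R - 1.
Proof.
have L0 := size_ne_cls_gt0 hn hv.
rewrite -[in RHS](prednK L0) -natr1 addrK; congr (_%:R).
rewrite modS_small // /phases_to_target; case: eqP => E; rewrite ?leq0n ?subn0 /=; try lia.
by rewrite ltnn; lia.
Qed.

(* A phase still to come costs at most [3 D] (travel, walk, and the overshoot
   edge); every round of phases advances [C] by at least [D] at a cost of at most
   [3 L D], whence the weight [3 L] on the remaining arc up to [j]. *)
Definition potential (st : state R n) : R :=
  let e := arc_len (st_mk st kj) in
  if st_walking st then
    (if st_ph st == qj then 2 * D - st_acc st + 3 * L%:R * (e + st_acc st)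
     else 2 * D - st_acc st + 3 * D * (phases_to_target (st_ph st))%:R + 3 * L%:R * e)
  else 3 * D + 3 * D * (phases_to_target (st_ph st))%:R + 3 * L%:R * e.

Lemma L_ge1 : 1 <= (L%:R : R).
Proof. by rewrite ler1n (size_ne_cls_gt0 hn hv). Qed.

Lemma potential_ge st : alg_inv st -> D <= potential st.
Proof.
case: st => ph mk w acc cur [/= Hph Hmk Hw]; rewrite /potential /=.
have e0 := arc_len_ge0 (mk kj); have L1 := L_ge1; have D0 := Dmax_gt0.
have P1 : 0 <= L%:R * arc_len (mk kj) by apply: mulr_ge0 => //; lra.
have P2 : 0 <= D * (phases_to_target ph)%:R by apply: mulr_ge0 => //; lra.
case: w Hw => Hw; last by lra.
have [_ _ a0 aD] := Hw erefl.
have P3 : 0 <= L%:R * acc by apply: mulr_ge0 => //; lra.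
by case: eqP => _; lra.
Qed.

Lemma potential_le st : alg_inv st -> potential st <= 5 * L%:R * D + 3 * L%:R * tlen.
Proof.
case: st => ph mk w acc cur [/= Hph Hmk Hw]; rewrite /potential /=.
have e0 := arc_len_ge0 (mk kj); have L1 := L_ge1; have D0 := Dmax_gt0.
have P1 : L%:R * arc_len (mk kj) <= L%:R * tlen by rewrite ler_wpM2l ?arc_len_le ?Hmk //; lra.
have P2 : D * (phases_to_target ph)%:R <= D * (L%:R - 1).
  by rewrite ler_wpM2l ?phases_to_target_le //; lra.
have P4 : D <= L%:R * D by rewrite ler_peMl //; lra.
case: w Hw => Hw; last by lra.
have [_ _ a0 aD] := Hw erefl.
have P3 : L%:R * acc <= L%:R * D by apply: ler_wpM2l; lra.
by case: eqP => _; lra.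
Qed.
Lemma nth_ne_cls_eq q q' : (q < L)%N -> (q' < L)%N ->
  (nth 0%N ne q == nth 0%N ne q') = (q == q').
Proof. by move=> qL q'L; rewrite nth_uniq // ne_cls_uniq. Qed.

Definition potential_dec (st : state R n) : Prop :=
  potential (stp st) + dist t (st_cur st) (st_cur (stp st)) <= potential st /\
  potential (stp st) + min_step <= potential st.

Lemma potential_dec_walking st : alg_inv st -> st_walking st ->
  st_cur st != j -> st_cur (stp st) != j -> potential_dec st.
Proof.
case: st => ph mk w acc cur [/= Hph Hmk Hw] /= w_true Hc _; rewrite /potential_dec /step w_true /=.
have [V2 Hcur a0 aD] := Hw w_true.
set k := nth 0%N ne ph in V2 Hcur *.
have L1 := L_ge1; have D0 := Dmax_gt0; have et0 := min_step_gt0; have etD := min_step_le_Dmax.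
have e0 := arc_len_ge0 (mk kj).
have szk := size_tour_gt0 (nth_ne_cls Hph).
set r := ((mk k).+1 %% size (tour k))%N.
set p' := nth cur (tour k) r.
have p'E : p' = nth x0 (tour k) r by rewrite /p' (set_nth_default x0) // ltn_pmod.
have dne : cur != p'.
  by rewrite Hcur p'E; apply: (tour_step_neq (nth_ne_cls Hph) V2); apply: Hmk.
have dD : dist t cur p' <= D := dist_le_Dmax _ _ _.
have ed : min_step <= dist t cur p' := min_step_le_dist dne.
have Pe : 0 <= L%:R * arc_len (mk kj) by apply: mulr_ge0 => //; lra.
case: (eqVneq ph qj) => [Epq|Npq]; last first.
  have kk : (kj == k) = false by rewrite nth_ne_cls_eq // eq_sym; exact/negbTE.
  case: ifP => _; rewrite /potential /= kk (negbTE Npq); last by split; lra.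
  rewrite -(phases_to_target_next Hph Npq) -natr1; split; lra.
subst ph.
have mkp : mk kj != pos by apply: contra Hc => /eqP E; rewrite Hcur -posj E.
have Hell := arc_len_step (Hmk _ qjL) mkp; rewrite -Hcur -p'E -/k -/r in Hell.
case: ifP => HDa; rewrite /potential /= !eqxx Hell; last by split; lra.
rewrite phases_to_target_after.
have P1 : L%:R * D <= L%:R * (acc + dist t cur p') by apply: ler_wpM2l => //; lra.
have P2 : 0 <= L%:R * arc_len r by apply: mulr_ge0; [lra | exact: arc_len_ge0].
split; lra.
Qed.

Lemma potential_dec_travelling st : alg_inv st -> ~~ st_walking st ->
  st_cur (stp st) != j -> potential_dec st.
Proof.
case: st => ph mk w acc cur [/= Hph Hmk Hw] /= /negbTE w_false.
rewrite /potential_dec /step w_false /=.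
set k := nth 0%N ne ph.
have L1 := L_ge1; have D0 := Dmax_gt0; have et0 := min_step_gt0; have etD := min_step_le_Dmax.
have e0 := arc_len_ge0 (mk kj).
have Pe : 0 <= L%:R * arc_len (mk kj) by apply: mulr_ge0 => //; lra.
have dD : dist t cur (nth cur (tour k) (mk k)) <= D := dist_le_Dmax _ _ _.
case: (eqVneq ph qj) => [Epq|Npq].
  subst ph; case: ifP => V2 /= Hc'.
    by rewrite /potential /= eqxx phases_to_target_qj; split; lra.
  have E1 : tour kj = [:: j].
    by apply: (tour_singleton (nth_ne_cls qjL)) => //; rewrite ltnNge V2.
  move: Hc' (Hmk _ qjL); rewrite -/k E1.
  by case: (mk kj) => //=; rewrite eqxx.
case: ifP => V2 /= Hc'; rewrite /potential /=; first by rewrite (negbTE Npq); split; lra.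
rewrite -(phases_to_target_next Hph Npq) -natr1; split; lra.
Qed.

Lemma potential_decP st : alg_inv st -> st_cur st != j -> st_cur (stp st) != j ->
  potential_dec st.
Proof.
move=> Ist Hc Hc'; case: (boolP (st_walking st)) => w.
  exact: potential_dec_walking.
exact: potential_dec_travelling.
Qed.
Lemma alg_stateS k : alg_state k.+1 = stp (alg_state k).
Proof. by rewrite /alg_state iterS. Qed.

Lemma reaches_target N k : potential (alg_state k) <= N%:R * min_step ->
  exists k', [/\ (k <= k')%N, pw k' = j &
    arrival t pw k' - arrival t pw k <= potential (alg_state k)].
Proof.
elim: N k => [|N IH] k PN.
  by have := potential_ge (alg_inv_state k); have := Dmax_gt0; rewrite mul0r in PN; lra.
have P0 := potential_ge (alg_inv_state k); have D0 := Dmax_gt0.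
have [pk|pk] := eqVneq (pw k) j; first by exists k; rewrite subrr; split => //; lra.
have [pk1|pk1] := eqVneq (pw k.+1) j.
  exists k.+1; split => //; rewrite arrivalS.
  by have := dist_le_Dmax t (pw k) (pw k.+1); lra.
have [dec1 dec2] := potential_decP (alg_inv_state k) pk (pk1 : st_cur (stp (alg_state k)) != j).
rewrite -alg_stateS in dec1 dec2.
have PN' : potential (alg_state k.+1) <= N%:R * min_step.
  by move: PN; rewrite -natr1 mulrDl mul1r; lra.
have [k' [kk' pk' ak']] := IH _ PN'; exists k'; split => //; first exact: ltnW.
by move: ak'; rewrite arrivalS; lra.
Qed.

Lemma target_revisited k : exists k', [/\ (k < k')%N, pw k' = j &
  arrival t pw k' - arrival t pw k <= D + (5 * L%:R * D + 3 * L%:R * tlen)].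
Proof.
have et0 := min_step_gt0.
set N := (Num.truncn (potential (alg_state k.+1) / min_step)).+1.
have PN : potential (alg_state k.+1) <= N%:R * min_step.
  by rewrite -ler_pdivrMr // ltW // truncnS_gt.
have [k' [kk' pk' ak']] := reaches_target PN; exists k'; split => //.
have := potential_le (alg_inv_state k.+1); have := dist_le_Dmax t (pw k) (pw k.+1).
by move: ak'; rewrite arrivalS; lra.
Qed.
End Target.

Lemma class_position i : exists qi pos, [/\ (qi < L)%N, i \in Vcls hn h (nth 0%N ne qi),
  (pos < size (tour (nth 0%N ne qi)))%N & nth x0 (tour (nth 0%N ne qi)) pos = i].
Proof.
have [qi qL iV] := exists_ne_cls hn hv i.
have im := mem_tour (nth_ne_cls qL) iV.
by exists qi, (index i (tour (nth 0%N ne qi))); rewrite index_mem nth_index.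
Qed.

Lemma alg_visits i k : exists k', (k < k')%N /\ pw k' = i.
Proof.
have [qi [pos [qL iV pL pE]]] := class_position i.
by have [k' [kk' pk' _]] := target_revisited qL iV pL pE k; exists k'.
Qed.

Lemma alg_arrival_unbounded x : exists k, x < arrival t pw k.
Proof. exact: (arrival_unbounded hv first_last_neq (alg_visits _) (alg_visits _)). Qed.

(* Class [k] has rates in [[rho, 2 rho)], [rho = 2^k hmin]: its tour is at most
   twice an MST, which weighs at most [M / rho] by [spanning_tree_weight_le]. *)
Lemma alg_height_le (p : nat -> 'I_n) (M : R) : p 0%N = x0 ->
  (forall i x, 0 <= x -> height h t p i x <= M) ->
  forall i x, 0 <= x -> height h t pw i x <= 24 * L%:R * M.
Proof.
move=> p0 HM i x x_ge0.
have [qi [pos [qL iV pL pE]]] := class_position i.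
set k := nth 0%N ne qi in iV pL pE.
set tl := tour_len t x0 (tour k).
have M0 := height_bound_ge0 hv HM i; have L1 := L_ge1; have D0 := Dmax_gt0.
set rho := 2 ^+ k * hmin hn h.
have rho0 : 0 < rho by rewrite mulr_gt0 ?exprn_gt0 // (hmin_gt0 hn hv).
have ih : h i < 2 * rho by move: iV; rewrite inE exprS -mulrA => /andP [].
have Vne : Vcls hn h k != finset.set0 by apply/set0Pn; exists i.
have rhoV i' : i' \in Vcls hn h k -> rho <= h i' by rewrite inE => /andP [].
have [E [ET EW]] := spanning_tree_weight_le hv HM rho0 Vne rhoV.
have tlE : tl <= 2 * (M / rho).
  by apply: le_trans (tour_len_le_tree (nth_ne_cls qL) ET) _; rewrite ler_pM2l.
have tl0 : 0 <= tl by apply: sumr_ge0 => l _; exact: (tour_edge_len_ge0 hv).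
have G0 : 0 <= D + (5 * L%:R * D + 3 * L%:R * tl).
  by have := mulr_ge0 (ler0n R L) (ltW D0); have := mulr_ge0 (ler0n R L) tl0; lra.
have gap := target_revisited qL iV pL pE.
apply: le_trans (height_le_gap hv G0 gap alg_arrival_unbounded x_ge0) _.
have hD : h i * D <= 2 * M.
  apply: le_trans (Dmax_height_bound hv HM); rewrite p0.
  by apply: ler_wpM2r; [exact: ltW | exact: (hmax_ge hn hv)].
have htl : h i * tl <= 4 * M.
  have -> : 4 * M = 2 * rho * (2 * (M / rho)) by field; rewrite gt_eqF.
  by apply: ler_pM; [exact: ltW (h_gt0 hv i) | exact: tl0 | exact: ltW | exact: tlE].
have P1 : L%:R * (h i * D) <= L%:R * (2 * M) by apply: ler_wpM2l => //; lra.
have P2 : L%:R * (h i * tl) <= L%:R * (4 * M) by apply: ler_wpM2l => //; lra.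
have P3 : M <= L%:R * M by rewrite ler_peMl.
have -> : h i * (D + (5 * L%:R * D + 3 * L%:R * tl)) =
  h i * D + 5 * L%:R * (h i * D) + 3 * L%:R * (h i * tl) by ring.
lra.
Qed.

Notation lg := (log2 ((Num.ceil (hmax hn h / hmin hn h))%:~R : R)).

Lemma log2_ceil_gt0 : 0 < lg.
Proof.
have := size_ne_cls_le hv hlt; have := size_ne_cls_gt0 hn hv.
by rewrite -(ler_nat R) => L1 Llg; lra.
Qed.

Lemma MH_alg_le (p : nat -> 'I_n) : p 0%N = x0 ->
  (MH h t pw <= (48 * lg)%:E * MH h t p)%E.
Proof.
move=> p0; have lg0 := log2_ceil_gt0.
case E: (MH h t p) => [M| |]; last 2 first.
- by rewrite mulry gtr0_sg ?mul1e ?leey // mulr_gt0.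
- have : ((height h t p x0 0)%:E <= MH h t p)%E by apply: ereal_sup_ubound; exists x0, 0.
  by rewrite E leeNy_eq.
have HM i x : 0 <= x -> height h t p i x <= M.
  by move=> x0'; rewrite -lee_fin -E; apply: ereal_sup_ubound; exists i, x.
have M0 := height_bound_ge0 hv HM x0.
rewrite -EFinM; apply: ge_ereal_sup => z [i [x [x_ge0 ->]]]; rewrite lee_fin.
apply: le_trans (alg_height_le p0 HM i x_ge0) _.
have : L%:R * M <= 2 * lg * M by apply: ler_wpM2r => //; exact: size_ne_cls_le hv hlt.
lra.
Qed.
End Algorithm.

Lemma le_mul_ereal_inf (R : realType) (A : set (\bar R)) (a : \bar R) (K : R) :
  0 < K -> (forall y, A y -> (a <= K%:E * y)%E) -> (a <= K%:E * ereal_inf A)%E.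
Proof.
move=> K0 aA.
have -> : a = (K%:E * ((K^-1)%:E * a))%E by rewrite muleA -EFinM mulfV ?gt_eqF // mul1e.
apply: lee_wpmul2l; first by rewrite lee_fin ltW.
by apply/ereal_infP => y Ay; rewrite lee_pdivrMl //; exact: aA.
Qed.

Theorem theorem5 :
  exists c : Rdefinitions.R, 0 < c /\
  forall (n : nat) (hn : (1 < n)%N) (h : 'I_n -> Rdefinitions.R)
         (t : 'I_n -> 'I_n -> Rdefinitions.R),
    valid_instance h t ->
    hmin hn h < hmax hn h ->
    forall (tour : nat -> seq 'I_n) (m0 : nat -> nat),
      alg_choices hn h t tour m0 ->
      (MH h t (alg_walk hn h t tour m0)
        <= (c * log2 (Num.ceil (hmax hn h / hmin hn h))%:~R)%:E
             * OPT h t (first_pt hn))%E.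
Proof.
exists 48; split => [|n hn h t hv hlt tour m0 Hch]; first lra.
apply: le_mul_ereal_inf; first by rewrite mulr_gt0 ?(log2_ceil_gt0 hv hlt).
by move=> _ [p p0 <-]; apply: MH_alg_le.
Qed.
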